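(* Suppose that the condition $V \succ 0,W \succ 0$ is relaxed to $V \succeq 0,W \succeq 0$. Assume that $f$ is a bijection for the given $V \succeq 0,W \succeq 0$. Consider any tuples $(\lambda ,S_k^\lambda ,F_k^\lambda ,P_k^\lambda )_{k = 0}^{N - 1}$ such that $\lambda>0$ and $C(\{ S_k^\lambda \} _{k = 0}^{N - 1} ) = \gamma$. Then, the corresponding $\{(S_k^\lambda,F_k^\lambda)\}_{k=0}^{N-1}$ is an optimal solution of the constrained LQG (covariance selection) problem.
   Context: Consider the stochastic LTI system $x(k+1)=Ax(k)+Bu(k)+w(k)$ with $x(k)\in\mathbb R^n$, $u(k)\in\mathbb R^m$, $x(0)\sim\mathcal N(z,V)$, $w(k)\sim\mathcal N(0,W)$ mutually independent, and linear feedback $u(k)=F_kx(k)$, $k\in\{0,\dots,N-1\}$. With $S_k=\mathbb E([x(k);u(k)][x(k);u(k)]^T)$, the constrained LQG (covariance selection) problem is: minimize $J_p(\{S_k\})=\mathrm{Tr}\big(Q_f([A\ B]S_{N-1}[A\ B]^T+W)\big)+\sum_{k=0}^{N-1}\mathrm{Tr}(\mathrm{diag}(Q_k,R_k)S_k)$ over $\{S_k,F_k\}$ subject to $S_k=\Phi(F_k,S_{k-1})$ ($k=1,\dots,N-1$), $S_0=[I_n;F_0](V+zz^T)[I_n;F_0]^T$, and $C(\{S_k\})\le\gamma$, where $C(\{S_k\})=\mathrm{Tr}\big(\tilde Q_f([A\ B]S_{N-1}[A\ B]^T+W)\big)+\sum_{k=0}^{N-1}\mathrm{Tr}(\mathrm{diag}(\tilde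 Q_k,\tilde R_k)S_k)$ and $\Phi(F,S)=[I_n;F]([A\ B]S[A\ B]^T+W)[I_n;F]^T$. Standing assumptions (other than the relaxed noise condition): $Q_f,\tilde Q_f,Q_k,\tilde Q_k\succeq0$, $R_k+\lambda\tilde R_k\succ0$ for all $k$, $\lambda>0$; strict feasibility of the inequality constraint; $C(\{S_k^0\})>\gamma$. For $\lambda\ge0$, $X_N^\lambda=Q_f+\lambda\tilde Q_f$, $X_k^\lambda=A^TX_{k+1}^\lambda A-A^TX_{k+1}^\lambda B(R_k+\lambda\tilde R_k+B^TX_{k+1}^\lambda B)^{-1}B^TX_{k+1}^\lambda A+Q_k+\lambda\tilde Q_k$, $F_k^\lambda=-(R_k+\lambda\tilde R_k+B^TX_{k+1}^\lambda B)^{-1}B^TX_{k+1}^\lambda A$, $S_0^\lambda=[I;F_0^\lambda](V+zz^T)[I;F_0^\lambda]^T$, $S_k^\lambda=\Phi(F_k^\lambda,S_{k-1}^\lambda)$, $P_k^\lambda=\begin{bmatrix}Q_k+\lambda\tilde Q_k+A^TX_{k+1}^\lambda A & A^TX_{k+1}^\lambda B\\ B^TX_{k+1}^\lambda A & R_k+\lambda\tilde R_k+B^TX_{k+1}^\lambda B\end{bmatrix}$, and $f(\lambda)=C(\{S_k^\lambda\}_{k=0}^{N-1})-\gamma$ (which depends on $V,W$). When $V\succ0,W\succ0$ it was shown that such tuples are exactly the KKT points and are optimal; with only $V\succeq0,W\succeq0$ these tuples still satisfy the KKT conditions but need not be the unique KKT points. *)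

From HB Require Import structures.
From mathcomp Require Import all_boot all_order all_algebra.
From mathcomp Require Import reals.
Set Implicit Arguments. Unset Strict Implicit. Unset Printing Implicit Defensive.
Import Order.TTheory GRing.Theory Num.Theory.
Local Open Scope ring_scope.

Section LQG.
Variable R : realType.

Definition psd (p : nat) (M : 'M[R]_p) : Prop :=
  M^T = M /\ forall v : 'cV[R]_p, 0 <= (v^T *m M *m v) 0 0.
Definition pd (p : nat) (M : 'M[R]_p) : Prop :=
  M^T = M /\ forall v : 'cV[R]_p, v != 0 -> 0 < (v^T *m M *m v) 0 0.

Variables (n m : nat).

Definition IF (F : 'M[R]_(m, n)) : 'M[R]_(n + m, n) := col_mx 1%:M F.

Definition Phi (A : 'M[R]_n) (B : 'M[R]_(n, m)) (W : 'M[R]_n)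
  (F : 'M[R]_(m, n)) (S : 'M[R]_(n + m)) : 'M[R]_(n + m) :=
  IF F *m (row_mx A B *m S *m (row_mx A B)^T + W) *m (IF F)^T.

Definition S0of (V : 'M[R]_n) (z : 'cV[R]_n) (F : 'M[R]_(m, n)) : 'M[R]_(n + m) :=
  IF F *m (V + z *m z^T) *m (IF F)^T.

(* Generic quadratic cost:
   Tr(Qf([A B] S_{N-1} [A B]^T + W)) + sum_{k<N} Tr(diag(Q_k,R_k) S_k).
   Used both for J_p and for C. *)
Definition cost (N : nat) (A : 'M[R]_n) (B : 'M[R]_(n, m)) (W : 'M[R]_n)
  (Qf : 'M[R]_n) (Q : nat -> 'M[R]_n) (Rk : nat -> 'M[R]_m)
  (S : nat -> 'M[R]_(n + m)) : R :=
  \tr (Qf *m (row_mx A B *m S N.-1 *m (row_mx A B)^T + W))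
  + \sum_(k < N) \tr (block_mx (Q k) 0 0 (Rk k) *m S k).

Definition dynamics (N : nat) (A : 'M[R]_n) (B : 'M[R]_(n, m)) (W V : 'M[R]_n)
  (z : 'cV[R]_n) (S : nat -> 'M[R]_(n + m)) (F : nat -> 'M[R]_(m, n)) : Prop :=
  S 0%N = S0of V z (F 0%N) /\
  forall k : nat, (1 <= k <= N.-1)%N -> S k = Phi A B W (F k) (S k.-1).

Definition feasible (N : nat) A B W V z (Qtf : 'M[R]_n) (Qt : nat -> 'M[R]_n)
  (Rt : nat -> 'M[R]_m) (gamma : R) S F : Prop :=
  dynamics N A B W V z S F /\ cost N A B W Qtf Qt Rt S <= gamma.

Definition optimal (N : nat) A B W V z (Qf Qtf : 'M[R]_n) (Q Qt : nat -> 'M[R]_n)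
  (Rk Rt : nat -> 'M[R]_m) (gamma : R) S F : Prop :=
  feasible N A B W V z Qtf Qt Rt gamma S F /\
  forall S' F', feasible N A B W V z Qtf Qt Rt gamma S' F' ->
    cost N A B W Qf Q Rk S <= cost N A B W Qf Q Rk S'.

Section Lambda.
Variables (N : nat) (A : 'M[R]_n) (B : 'M[R]_(n, m)) (W V : 'M[R]_n)
  (z : 'cV[R]_n) (Qf Qtf : 'M[R]_n) (Q Qt : nat -> 'M[R]_n)
  (Rk Rt : nat -> 'M[R]_m) (lam : R).

(* Xb j = X_{N-j}^lambda (backward Riccati recursion). *)
Fixpoint Xb (j : nat) : 'M[R]_n :=
  match j with
  | 0%N => Qf + lam *: Qtf
  | j'.+1 =>
      let X := Xb j' in
      let k := (N - j'.+1)%N in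
      A^T *m X *m A
      - A^T *m X *m B *m invmx (Rk k + lam *: Rt k + B^T *m X *m B) *m B^T *m X *m A
      + Q k + lam *: Qt k
  end.

Definition Xlam (k : nat) : 'M[R]_n := Xb (N - k).

Definition Flam (k : nat) : 'M[R]_(m, n) :=
  - (invmx (Rk k + lam *: Rt k + B^T *m Xlam k.+1 *m B) *m B^T *m Xlam k.+1 *m A).

Fixpoint Slam (k : nat) : 'M[R]_(n + m) :=
  match k with
  | 0%N => S0of V z (Flam 0%N)
  | k'.+1 => Phi A B W (Flam k) (Slam k')
  end.

Definition flam (gamma : R) : R := cost N A B W Qtf Qt Rt Slam - gamma.

End Lambda.
End LQG.

From HB Require Import structures.
From mathcomp Require Import all_boot all_order all_algebra.
From mathcomp Require Import reals.
From mathcomp Require Import ring lra.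
Import Order.TTheory GRing.Theory Num.Theory.
Local Open Scope ring_scope.
Set Implicit Arguments. Unset Strict Implicit. Unset Printing Implicit Defensive.

(* Weak duality for the Lagrangian L = J_p + lam C.  Its weights Q_k + lam Q~_k,
   R_k + lam R~_k and Q_f + lam Q~_f are those of an unconstrained LQ problem whose
   Riccati solution is X^lam.  Completing the square at every stage writes L, along
   any solution of the covariance dynamics, as
     Tr(X_0 E[x_0 x_0^T]) + sum_k Tr(X_{k+1} W)
       + sum_k Tr((F_k - F_k^lam)^T P_k (F_k - F_k^lam) E[x_k x_k^T])
   with P_k = R_k + lam R~_k + B^T X_{k+1} B positive definite.  Each term of the last
   sum is the trace of a product of psd matrices, hence nonnegative, and it vanishes
   at F^lam.  So S^lam minimizes L, and for every feasible S
     J(S^lam) + lam gamma = L(S^lam) <= L(S) <= J(S) + lam gamma. *)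

Section PositiveSemidefinite.
Variable R : realType.
Implicit Types (p : nat).

Lemma mx11_trmx (M : 'M[R]_1) : M^T 0 0 = M 0 0.
Proof. by rewrite mxE. Qed.

Lemma mx11_mul (a b : 'M[R]_1) : (a *m b) 0 0 = a 0 0 * b 0 0.
Proof. by rewrite mxE big_ord1. Qed.

Lemma mxtrace11 (M : 'M[R]_1) : \tr M = M 0 0.
Proof. by rewrite /mxtrace big_ord1. Qed.

Definition qform p (Y : 'M[R]_p) (u v : 'cV[R]_p) : R := (u^T *m Y *m v) 0 0.

Lemma qformC p (Y : 'M[R]_p) u v : Y^T = Y -> qform Y u v = qform Y v u.
Proof. by move=> sY; rewrite /qform -mx11_trmx !trmx_mul trmxK sY mulmxA. Qed.

Lemma qformDl p (Y : 'M[R]_p) u w v : qform Y (u + w) v = qform Y u v + qform Y w v.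
Proof. by rewrite /qform linearD /= !mulmxDl mxE. Qed.

Lemma qformDr p (Y : 'M[R]_p) u v w : qform Y u (v + w) = qform Y u v + qform Y u w.
Proof. by rewrite /qform !mulmxDr mxE. Qed.

Lemma qformZl p (Y : 'M[R]_p) t u v : qform Y (t *: u) v = t * qform Y u v.
Proof. by rewrite /qform linearZ /= -!scalemxAl mxE. Qed.

Lemma qformZr p (Y : 'M[R]_p) t u v : qform Y u (t *: v) = t * qform Y u v.
Proof. by rewrite /qform -!scalemxAr mxE. Qed.

Lemma qformDm p (Y Z : 'M[R]_p) u v : qform (Y + Z) u v = qform Y u v + qform Z u v.
Proof. by rewrite /qform mulmxDr mulmxDl mxE. Qed.

Lemma qformN p (Y : 'M[R]_p) u v : qform (- Y) u v = - qform Y u v.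
Proof. by rewrite /qform mulmxN mulNmx mxE. Qed.

Lemma qformZm p (Y : 'M[R]_p) c u v : qform (c *: Y) u v = c * qform Y u v.
Proof. by rewrite /qform -scalemxAr -scalemxAl mxE. Qed.

Lemma qform_delta p (Y : 'M[R]_p) i j :
  qform Y (delta_mx i 0) (delta_mx j 0) = Y i j.
Proof. by rewrite /qform trmx_delta -rowE -colE !mxE. Qed.

Lemma qform_line p (Y : 'M[R]_p) v e t : Y^T = Y ->
  qform Y (v + t *: e) (v + t *: e)
  = qform Y v v + 2 * t * qform Y e v + t ^+ 2 * qform Y e e.
Proof. by move=> sY; rewrite qformDl !qformDr !qformZl !qformZr (qformC v e sY); lra. Qed.

Lemma psd_qform_ge0 p (Y : 'M[R]_p) v : psd Y -> 0 <= qform Y v v.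
Proof. by case=> _ /(_ v). Qed.

(* Otherwise [v + t e] has negative energy for a suitable [t]. *)
Lemma psd_qform_eq0 p (Y : 'M[R]_p) e v :
  psd Y -> qform Y e e = 0 -> qform Y e v = 0.
Proof.
move=> [sY pY] e0; apply/eqP/negPn/negP => ev0.
have := pY (v + (- (qform Y v v + 1) / (2 * qform Y e v)) *: e).
rewrite -/(qform _ _ _) qform_line // e0 mulr0 addr0.
have -> : 2 * (- (qform Y v v + 1) / (2 * qform Y e v)) * qform Y e v
          = - (qform Y v v + 1) by field; rewrite ev0.
lra.
Qed.

Lemma psd_diag_eq0 p (Y : 'M[R]_p) : psd Y -> (forall i, Y i i = 0) -> Y = 0.
Proof.
move=> pY Y0; apply/matrixP => i j; rewrite mxE -qform_delta.
by apply: psd_qform_eq0; rewrite // qform_delta.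
Qed.

Definition deflate p (Y : 'M[R]_p) (e : 'cV[R]_p) : 'M[R]_p :=
  Y - (qform Y e e)^-1 *: (Y *m e *m (Y *m e)^T).

Lemma qform_deflate p (Y : 'M[R]_p) e u v : Y^T = Y ->
  qform (deflate Y e) u v = qform Y u v - (qform Y e e)^-1 * (qform Y e u * qform Y e v).
Proof.
move=> sY; rewrite qformDm qformN qformZm /qform !mulmxA -(mulmxA (u^T *m Y *m e)).
by rewrite mx11_mul trmx_mul sY -/(qform Y u e) -/(qform Y e v) (qformC u e sY).
Qed.

Lemma psd_deflate p (Y : 'M[R]_p) e : psd Y -> 0 < qform Y e e -> psd (deflate Y e).
Proof.
move=> [sY pY] e0; split.
  by rewrite /deflate linearB /= linearZ /= !trmx_mul !trmxK sY.
move=> v; rewrite -/(qform _ _ _) qform_deflate //.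
have := pY (v - (qform Y e v / qform Y e e) *: e).
rewrite -scaleNr -/(qform _ _ _) qform_line //.
suff -> : qform Y v v + 2 * - (qform Y e v / qform Y e e) * qform Y e v
          + (- (qform Y e v / qform Y e e)) ^+ 2 * qform Y e e
        = qform Y v v - (qform Y e e)^-1 * (qform Y e v * qform Y e v) by [].
by field; rewrite lt0r_neq0.
Qed.

Lemma deflate_diag_support p (Y : 'M[R]_p) i : psd Y -> Y i i != 0 ->
  [set j | deflate Y (delta_mx i 0) j j != 0] \proper [set j | Y j j != 0].
Proof.
move=> pY Yii; have sY := pY.1; set e := delta_mx i 0.
have Yee : qform Y e e = Y i i by rewrite qform_delta.
apply/properP; split.
  apply/subsetP => j; rewrite !inE; apply: contra => /eqP Yjj.
  have ej : qform Y e (delta_mx j 0) = 0.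
    by rewrite qformC // psd_qform_eq0 // qform_delta.
  by rewrite -qform_delta qform_deflate // ej mul0r mulr0 subr0 qform_delta Yjj.
exists i; rewrite !inE // negbK -qform_delta qform_deflate // -/e Yee.
by rewrite mulrA mulVf // mul1r subrr.
Qed.

(* Peel off rank-one psd terms until the diagonal, hence the matrix, vanishes. *)
Lemma mxtrace_mul_psd_ge0 p (P Y : 'M[R]_p) : psd P -> psd Y -> 0 <= \tr (P *m Y).
Proof.
move=> pP; have [k] := ubnP #|[set i | Y i i != 0]|.
elim: k Y => // k IH Y supp pY.
have [i Yii|Y0] := pickP (fun i => Y i i != 0); last first.
  by rewrite (psd_diag_eq0 pY) => [|i]; [rewrite mulmx0 linear0|exact/eqP/negbFE/Y0].
set e := delta_mx i 0 : 'cV[R]_p.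
have e0 : 0 < qform Y e e by rewrite lt0r psd_qform_ge0 // qform_delta Yii.
rewrite -[Y](subrK ((qform Y e e)^-1 *: (Y *m e *m (Y *m e)^T))) -/(deflate Y e).
rewrite mulmxDr mxtraceD -scalemxAr mxtraceZ; apply: addr_ge0.
  apply: IH; last exact: psd_deflate.
  by rewrite -ltnS; apply: leq_trans supp; apply: proper_card; exact: deflate_diag_support.
apply: mulr_ge0; first by rewrite invr_ge0 ltW.
by rewrite mulmxA mxtrace_mulC mulmxA mxtrace11; exact: psd_qform_ge0.
Qed.

Lemma mxtrace_mul_congr p q (M : 'M[R]_p) (C : 'M[R]_(p, q)) (Sig : 'M[R]_q) :
  \tr (M *m (C *m Sig *m C^T)) = \tr (C^T *m M *m C *m Sig).
Proof. by rewrite !mulmxA mxtrace_mulC !mulmxA. Qed.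

Lemma psdD p (Y Z : 'M[R]_p) : psd Y -> psd Z -> psd (Y + Z).
Proof.
move=> [sY pY] [sZ pZ]; split; first by rewrite linearD /= sY sZ.
by move=> v; rewrite -/(qform _ _ _) qformDm addr_ge0 ?pY ?pZ.
Qed.

Lemma psdZ p (Y : 'M[R]_p) c : 0 <= c -> psd Y -> psd (c *: Y).
Proof.
move=> c0 [sY pY]; split; first by rewrite linearZ /= sY.
by move=> v; rewrite -/(qform _ _ _) qformZm mulr_ge0 ?pY.
Qed.

Lemma psd_congr p q (C : 'M[R]_(q, p)) (Y : 'M[R]_p) : psd Y -> psd (C *m Y *m C^T).
Proof.
move=> [sY pY]; split; first by rewrite !trmx_mul trmxK sY mulmxA.
by move=> v; have := pY (C^T *m v); rewrite trmx_mul trmxK !mulmxA.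
Qed.

Lemma psd_tr_congr p q (C : 'M[R]_(p, q)) (Y : 'M[R]_p) : psd Y -> psd (C^T *m Y *m C).
Proof. by move/(psd_congr C^T); rewrite trmxK. Qed.

Lemma psd_outer p (z : 'cV[R]_p) : psd (z *m z^T).
Proof.
split=> [|v]; first by rewrite trmx_mul trmxK.
rewrite mulmxA -(mulmxA (v^T *m z)) mx11_mul -[(z^T *m v) 0 0]mx11_trmx.
by rewrite trmx_mul trmxK -expr2 sqr_ge0.
Qed.

Lemma pd_psd p (Y : 'M[R]_p) : pd Y -> psd Y.
Proof.
move=> [sY pY]; split=> // v; have [->|v0] := eqVneq v 0.
  by rewrite mulmx0 mxE.
exact: ltW (pY v v0).
Qed.

Lemma pdD_psd p (Y Z : 'M[R]_p) : pd Y -> psd Z -> pd (Y + Z).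
Proof.
move=> [sY pY] [sZ pZ]; split; first by rewrite linearD /= sY sZ.
by move=> v v0; rewrite -/(qform _ _ _) qformDm ltr_wpDr ?pZ ?pY.
Qed.

Lemma pd_unitmx p (Y : 'M[R]_p) : pd Y -> Y \in unitmx.
Proof.
move=> [_ pY]; rewrite unitmxE unitfE; apply/negP => /det0P [v v0 vY].
by have := pY v^T; rewrite trmx_eq0 trmxK vY mul0mx mxE ltxx => /(_ v0).
Qed.

End PositiveSemidefinite.

Section CompletingTheSquare.
Variables (R : realType) (n m : nat) (A : 'M[R]_n) (B : 'M[R]_(n, m)).

Definition riccati (Qs : 'M[R]_n) (Rs : 'M[R]_m) (X : 'M[R]_n) : 'M[R]_n :=
  A^T *m X *m A - A^T *m X *m B *m invmx (Rs + B^T *m X *m B) *m B^T *m X *m A + Qs.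

Definition lq_gain (Rs : 'M[R]_m) (X : 'M[R]_n) : 'M[R]_(m, n) :=
  - (invmx (Rs + B^T *m X *m B) *m B^T *m X *m A).

Lemma riccati_complete_square Qs Rs X (F : 'M[R]_(m, n)) :
  X^T = X -> Rs^T = Rs -> Rs + B^T *m X *m B \in unitmx ->
  Qs + F^T *m Rs *m F + (A + B *m F)^T *m X *m (A + B *m F)
  = riccati Qs Rs X
    + (F - lq_gain Rs X)^T *m (Rs + B^T *m X *m B) *m (F - lq_gain Rs X).
Proof.
move=> sX sRs; rewrite /riccati /lq_gain.
have [P eP] : {P | Rs + B^T *m X *m B = P} by exists (Rs + B^T *m X *m B).
rewrite eP => uP.
have sP : P^T = P by rewrite -eP linearD /= !trmx_mul trmxK sX sRs mulmxA.
have sPi : (invmx P)^T = invmx P by rewrite trmx_inv sP.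
have [H eH] : {H | B^T *m X *m A = H} by exists (B^T *m X *m A).
have HT : H^T = A^T *m X *m B by rewrite -eH !trmx_mul trmxK sX mulmxA.
set T := F^T *m H + H^T *m F + F^T *m (B^T *m X *m B) *m F.
have eK : (F - - (invmx P *m B^T *m X *m A))^T *m P *m (F - - (invmx P *m B^T *m X *m A))
          = F^T *m Rs *m F + T + H^T *m invmx P *m H.
  rewrite opprK -!(mulmxA (invmx P)) eH [(F + _)^T]linearD /= trmx_mul sPi.
  rewrite !mulmxDl !mulmxDr !mulmxA -(mulmxA F^T P (invmx P)) mulmxV // mulmx1.
  rewrite -!(mulmxA H^T (invmx P) P) mulVmx // mulmx1 -eP mulmxDr mulmxDl /T !mulmxA.
  by rewrite !addrA; congr (_ + _); rewrite -!addrA; congr (_ + _); rewrite addrC -addrA.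
have eA : (A + B *m F)^T *m X *m (A + B *m F) = A^T *m X *m A + T.
  rewrite [(A + _)^T]linearD /= trmx_mul !mulmxDl !mulmxDr /T HT -eH !mulmxA.
  by rewrite -addrA; congr (_ + _); rewrite addrCA addrA.
rewrite eK eA HT -eH !mulmxA; set g := A^T *m X *m B *m _ *m _ *m _ *m A.
by rewrite [RHS]addrA [RHS]addrAC (addrAC (_ - g)) subrK addrACA (addrC Qs).
Qed.

Lemma psd_riccati Qs Rs X : psd Qs -> pd Rs -> psd X -> psd (riccati Qs Rs X).
Proof.
move=> pQs pRs pX; set K := lq_gain Rs X.
have uP : Rs + B^T *m X *m B \in unitmx by apply/pd_unitmx/pdD_psd/psd_tr_congr.
have := riccati_complete_square Qs K pX.1 pRs.1 uP.
rewrite subrr trmx0 !mul0mx addr0 => <-.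
by apply: psdD (psd_tr_congr _ pX); apply: psdD pQs (psd_tr_congr _ (pd_psd pRs)).
Qed.

Lemma mxtrace_closed_loop (X Qs W Sig : 'M[R]_n) (Rs : 'M[R]_m) (F : 'M[R]_(m, n)) :
  \tr (block_mx Qs 0 0 Rs *m (IF F *m Sig *m (IF F)^T))
  + \tr (X *m (row_mx A B *m (IF F *m Sig *m (IF F)^T) *m (row_mx A B)^T + W))
  = \tr ((Qs + F^T *m Rs *m F + (A + B *m F)^T *m X *m (A + B *m F)) *m Sig)
    + \tr (X *m W).
Proof.
have GI : row_mx A B *m IF F = A + B *m F by rewrite /IF mul_row_col mulmx1.
have BI : (IF F)^T *m block_mx Qs 0 0 Rs *m IF F = Qs + F^T *m Rs *m F.
  rewrite /IF -mulmxA mul_block_col tr_col_mx mul_row_col trmx1.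
  by rewrite !mul1mx !mulmx1 !mul0mx addr0 add0r mulmxA.
rewrite mulmxDr mxtraceD addrA [in RHS]mulmxDl [in RHS]mxtraceD.
congr (_ + _ + _); first by rewrite mxtrace_mul_congr BI.
by rewrite -GI -mxtrace_mul_congr trmx_mul !mulmxA.
Qed.

End CompletingTheSquare.

Section CovarianceDynamics.
Variables (R : realType) (n m N : nat) (A : 'M[R]_n) (B : 'M[R]_(n, m)).
Variables (W V : 'M[R]_n) (z : 'cV[R]_n).

(* [state_moment S k] is E[x(k) x(k)^T]. *)
Definition state_moment (S : nat -> 'M[R]_(n + m)) (k : nat) : 'M[R]_n :=
  if k is k'.+1 then row_mx A B *m S k' *m (row_mx A B)^T + W else V + z *m z^T.

Lemma dynamics_state_moment S F k : dynamics N A B W V z S F -> (k < N)%N ->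
  S k = IF (F k) *m state_moment S k *m (IF (F k))^T.
Proof. by case=> S0 Sk; case: k => [|k] kN //=; rewrite Sk //= ltn_predRL. Qed.

Lemma psd_state_moment S F k : psd V -> psd W -> dynamics N A B W V z S F ->
  (k < N)%N -> psd (state_moment S k).
Proof.
move=> pV pW dynS; elim: k => [|k IH] kN /=; first exact: psdD pV (psd_outer z).
rewrite (dynamics_state_moment dynS (ltnW kN)).
by apply: psdD pW; do 2!apply: psd_congr; exact: IH (ltnW kN).
Qed.

End CovarianceDynamics.

Lemma dynamics_Slam (R : realType) n m N (A : 'M[R]_n) (B : 'M[R]_(n, m)) W V z
    Qf Qtf Q Qt Rk Rt lam :
  dynamics N A B W V z (Slam N A B W V z Qf Qtf Q Qt Rk Rt lam)
    (Flam N A B Qf Qtf Q Qt Rk Rt lam).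
Proof. by split=> // [[|k]]. Qed.

Lemma cost_weightsDZ (R : realType) n m N (A : 'M[R]_n) (B : 'M[R]_(n, m)) W
    Qf Qtf Q Qt Rk Rt (lam : R) S :
  cost N A B W (Qf + lam *: Qtf) (fun k => Q k + lam *: Qt k) (fun k => Rk k + lam *: Rt k) S
  = cost N A B W Qf Q Rk S + lam * cost N A B W Qtf Qt Rt S.
Proof.
rewrite /cost mulmxDl -scalemxAl mxtraceD mxtraceZ mulrDr addrACA.
congr (_ + _); rewrite mulr_sumr -big_split; apply: eq_bigr => k _ /=.
by rewrite -mxtraceZ -mxtraceD scalemxAl -mulmxDl scale_block_mx add_block_mx !scaler0 !addr0.
Qed.

Section LagrangianMinimizer.
Variables (R : realType) (n m N : nat) (A : 'M[R]_n) (B : 'M[R]_(n, m)).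
Variables (W V : 'M[R]_n) (z : 'cV[R]_n).
Variables (Qf Qtf : 'M[R]_n) (Q Qt : nat -> 'M[R]_n) (Rk Rt : nat -> 'M[R]_m) (lam : R).

Let Qlam k := Q k + lam *: Qt k.
Let Rlam k := Rk k + lam *: Rt k.
Let X := Xlam N A B Qf Qtf Q Qt Rk Rt lam.
Let K := Flam N A B Qf Qtf Q Qt Rk Rt lam.
Let Pgain k := Rlam k + B^T *m X k.+1 *m B.

Hypothesis N_gt0 : (0 < N)%N.
Hypotheses (psdV : psd V) (psdW : psd W).
Hypothesis psd_Qflam : psd (Qf + lam *: Qtf).
Hypothesis psd_Qlam : forall k, (k < N)%N -> psd (Qlam k).
Hypothesis pd_Rlam : forall k, (k < N)%N -> pd (Rlam k).

Lemma Xlam_N : X N = Qf + lam *: Qtf.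
Proof. by rewrite /X /Xlam subnn. Qed.

Lemma Xlam_riccati k : (k < N)%N -> X k = riccati A B (Qlam k) (Rlam k) (X k.+1).
Proof.
move=> kN; rewrite /X /Xlam -(subnSK kN) /= (subnSK kN) subKn ?(ltnW kN) //.
by rewrite /riccati addrA.
Qed.

Lemma psd_Xlam k : (k <= N)%N -> psd (X k).
Proof.
move=> kN; rewrite -(subKn kN); elim: (N - k)%N (leq_subr k N) => [|j IH] jN.
  by rewrite subn0 Xlam_N.
have jN' : (N - j.+1 < N)%N by rewrite ltn_subrL N_gt0.
rewrite Xlam_riccati // subnSK //; apply: psd_riccati; [exact: psd_Qlam|exact: pd_Rlam|].
exact: IH (ltnW jN).
Qed.

Lemma pd_Pgain k : (k < N)%N -> pd (Pgain k).
Proof. by move=> kN; apply: pdD_psd (pd_Rlam kN) (psd_tr_congr _ (psd_Xlam kN)). Qed.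

Let excess S (F : nat -> 'M[R]_(m, n)) k :=
  \tr ((F k - K k)^T *m Pgain k *m (F k - K k) *m state_moment A B W V z S k).

Lemma lagrangian_partial_sum S F j : dynamics N A B W V z S F -> (j <= N)%N ->
  \sum_(k < j) \tr (block_mx (Qlam k) 0 0 (Rlam k) *m S k)
    + \tr (X j *m state_moment A B W V z S j)
  = \tr (X 0%N *m state_moment A B W V z S 0)
    + \sum_(k < j) (\tr (X k.+1 *m W) + excess S F k).
Proof.
move=> dynS; elim: j => [|j IH] jN; first by rewrite !big_ord0 add0r addr0.
rewrite !big_ord_recr /= [RHS]addrA -(IH (ltnW jN)) -addrA.
rewrite (dynamics_state_moment dynS jN) mxtrace_closed_loop.
have pX := psd_Xlam jN.
rewrite riccati_complete_square ?pX.1 ?(pd_Rlam jN).1 ?(pd_unitmx (pd_Pgain jN)) //.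
rewrite -Xlam_riccati // mulmxDl mxtraceD /excess.
by rewrite (addrC (\tr (X j.+1 *m W))) !addrA.
Qed.

Lemma lagrangian_cost S F : dynamics N A B W V z S F ->
  cost N A B W (Qf + lam *: Qtf) Qlam Rlam S
  = \tr (X 0%N *m (V + z *m z^T)) + \sum_(k < N) (\tr (X k.+1 *m W) + excess S F k).
Proof.
move=> dynS; rewrite -(lagrangian_partial_sum dynS (leqnn N)) /cost -Xlam_N addrC.
by rewrite -[in state_moment _ _ _ _ _ _ N](prednK N_gt0).
Qed.

Lemma excess_ge0 S F k : dynamics N A B W V z S F -> (k < N)%N -> 0 <= excess S F k.
Proof.
move=> dynS kN; rewrite /excess -mxtrace_mul_congr.
exact: mxtrace_mul_psd_ge0 (pd_psd (pd_Pgain kN)) (psd_congr _ (psd_state_moment psdV psdW dynS kN)).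
Qed.

Lemma excess_Flam k : excess (Slam N A B W V z Qf Qtf Q Qt Rk Rt lam) K k = 0.
Proof. by rewrite /excess subrr trmx0 !mul0mx linear0. Qed.

Lemma Slam_lagrangian_min S F : dynamics N A B W V z S F ->
  cost N A B W (Qf + lam *: Qtf) Qlam Rlam (Slam N A B W V z Qf Qtf Q Qt Rk Rt lam)
  <= cost N A B W (Qf + lam *: Qtf) Qlam Rlam S.
Proof.
move=> dynS; rewrite (lagrangian_cost (dynamics_Slam _ _ _ _ _ _ _ _ _ _ _ _ _)).
rewrite (lagrangian_cost dynS) lerD2l; apply: ler_sum => k _.
by rewrite excess_Flam addr0 lerDl excess_ge0.
Qed.

End LagrangianMinimizer.

Lemma optimal_of_lagrangian_min (R : realType) n m N (A : 'M[R]_n) (B : 'M[R]_(n, m))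
    W V z Qf Qtf Q Qt Rk Rt (gamma lam : R) S F :
  0 <= lam -> dynamics N A B W V z S F -> cost N A B W Qtf Qt Rt S = gamma ->
  (forall S' F', dynamics N A B W V z S' F' ->
     cost N A B W (Qf + lam *: Qtf) (fun k => Q k + lam *: Qt k)
       (fun k => Rk k + lam *: Rt k) S
     <= cost N A B W (Qf + lam *: Qtf) (fun k => Q k + lam *: Qt k)
       (fun k => Rk k + lam *: Rt k) S') ->
  optimal N A B W V z Qf Qtf Q Qt Rk Rt gamma S F.
Proof.
move=> lam_ge0 dynS CS Smin; split; first by split; rewrite ?CS.
move=> S' F' [dynS' CS']; have := Smin S' F' dynS'; rewrite !cost_weightsDZ CS.
have : lam * cost N A B W Qtf Qt Rt S' <= lam * gamma by rewrite ler_wpM2l.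
lra.
Qed.

Theorem proposition7 (R : realType) (n m N : nat)
  (A : 'M[R]_n) (B : 'M[R]_(n, m)) (W V : 'M[R]_n) (z : 'cV[R]_n)
  (Qf Qtf : 'M[R]_n) (Q Qt : nat -> 'M[R]_n) (Rk Rt : nat -> 'M[R]_m)
  (gamma lam : R) :
  (0 < N)%N ->
  (* relaxed noise condition *)
  psd V -> psd W ->
  (* standing assumptions *)
  psd Qf -> psd Qtf ->
  (forall k, (k < N)%N -> psd (Q k) /\ psd (Qt k)) ->
  (forall k mu, (k < N)%N -> 0 < mu -> pd (Rk k + mu *: Rt k)) ->
  (exists S F, dynamics N A B W V z S F /\ cost N A B W Qtf Qt Rt S < gamma) ->
  gamma < cost N A B W Qtf Qt Rt (Slam N A B W V z Qf Qtf Q Qt Rk Rt 0) ->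
  (* f is a bijection (onto its image) on [0, +oo) *)
  (forall l1 l2, 0 <= l1 -> 0 <= l2 ->
     flam N A B W V z Qf Qtf Q Qt Rk Rt l1 gamma
     = flam N A B W V z Qf Qtf Q Qt Rk Rt l2 gamma -> l1 = l2) ->
  (* the tuple *)
  0 < lam ->
  cost N A B W Qtf Qt Rt (Slam N A B W V z Qf Qtf Q Qt Rk Rt lam) = gamma ->
  optimal N A B W V z Qf Qtf Q Qt Rk Rt gamma
    (Slam N A B W V z Qf Qtf Q Qt Rk Rt lam) (Flam N A B Qf Qtf Q Qt Rk Rt lam).
Proof.
(* Strict feasibility, C(S^0) > gamma and injectivity of f only serve to produce lam. *)
move=> N_gt0 pV pW pQf pQtf pQ pR _ _ _ lam_gt0 C_gamma.
apply: optimal_of_lagrangian_min (ltW lam_gt0) (dynamics_Slam _ _ _ _ _ _ _ _ _ _ _ _ _)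
  C_gamma _ => S F; apply: Slam_lagrangian_min => // [|k kN|k kN].
- exact: psdD pQf (psdZ (ltW lam_gt0) pQtf).
- by have [pQk pQtk] := pQ k kN; apply: psdD pQk (psdZ (ltW lam_gt0) pQtk).
- exact: pR.
Qed.
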